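(* For every formula $\varphi$ of propositional linear temporal logic, $\mathrm{LTL} \models \neg \Box (\varphi\leftrightarrow\bigcirc\diamondsuit\neg\varphi)$.
   Context: Propositional linear temporal logic (LTL) with the ''next'' modality $\bigcirc$, ''always'' modality $\Box$ and $\diamondsuit\varphi\equiv\neg\Box\neg\varphi$ (''sometime''), interpreted over infinite sequences of states $\mathcal{K}=(\eta_0,\eta_1,\dots)$ with $\mathcal{K}_i(\bigcirc\varphi)=\mathcal{K}_{i+1}(\varphi)$, $\mathcal{K}_i(\Box\varphi)=\mathfrak{tt}$ iff $\mathcal{K}_j(\varphi)=\mathfrak{tt}$ for all $j\ge i$. $\mathrm{LTL}\models\varphi$ means validity in all temporal structures. Here $\bigcirc$ denotes the LTL ''next'' operator. *)

From Stdlib Require Import Bool.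

Inductive formula : Type :=
| Var : nat -> formula
| FFalse : formula
| Neg : formula -> formula
| Imp : formula -> formula -> formula
| Next : formula -> formula
| Always : formula -> formula.

Definition And (A B : formula) : formula := Neg (Imp A (Neg B)).
Definition Equiv (A B : formula) : formula := And (Imp A B) (Imp B A).
Definition Sometime (A : formula) : formula := Neg (Always (Neg A)).

Definition state := nat -> bool.
Definition tstructure := nat -> state.

Fixpoint holds (K : tstructure) (i : nat) (A : formula) : Prop :=
  match A with
  | Var v => K i v = true
  | FFalse => False
  | Neg B => ~ holds K i B
  | Imp B C => holds K i B -> holds K i C
  | Next B => holds K (S i) B
  | Always B => forall j, i <= j -> holds K j B
  end.

Definition valid (A : formula) : Prop :=
  forall (K : tstructure) (i : nat), holds K i A.

(* If phi held at j exactly when phi fails somewhere strictly after j, then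
   a failure of phi at j would force phi to hold from j+1 on, contradicting the
   equivalence at j+1; so phi always holds, contradicting the equivalence once
   more. *)
From Stdlib Require Import Classical Lia.

Lemma holds_Equiv (K : tstructure) (i : nat) (A B : formula) :
  holds K i (Equiv A B) <-> (holds K i A <-> holds K i B).
Proof. simpl; tauto. Qed.

Lemma holds_Sometime (K : tstructure) (i : nat) (A : formula) :
  holds K i (Sometime A) <-> exists j, i <= j /\ holds K j A.
Proof.
  simpl; split.
  - intro H; apply NNPP; intro Hno; apply H; intros j Hj HA; eauto.
  - intros [j [Hj HA]] Hall; exact (Hall j Hj HA).
Qed.

Section FailsLaterIffHolds.

Variable P : nat -> Prop.
Variable i : nat.
Hypothesis P_iff_fails_later :
  forall j, i <= j -> (P j <-> exists m, j < m /\ ~ P m).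

Lemma holds_after_failure (j : nat) :
  i <= j -> ~ P j -> forall m, j < m -> P m.
Proof.
  intros Hj HPj m Hm; apply NNPP; intro HPm.
  apply HPj, (P_iff_fails_later j Hj); eauto.
Qed.

Lemma holds_from_start (j : nat) : i <= j -> P j.
Proof.
  intro Hj; apply NNPP; intro HPj.
  assert (HPSj : P (S j)) by (apply (holds_after_failure j); auto).
  apply (P_iff_fails_later (S j)) in HPSj as [m [Hm HPm]]; [|lia].
  apply HPm, (holds_after_failure j); auto; lia.
Qed.

Lemma fails_later_iff_holds_absurd : False.
Proof.
  destruct (proj1 (P_iff_fails_later i (le_n i)) (holds_from_start i (le_n i)))
    as [m [Hm HPm]].
  apply HPm, holds_from_start; lia.
Qed.

End FailsLaterIffHolds.

Theorem mainTheorem3 : forall phi : formula,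
  valid (Neg (Always (Equiv phi (Next (Sometime (Neg phi)))))).
Proof.
  intros phi K i Hfix.
  apply (fails_later_iff_holds_absurd (fun m => holds K m phi) i).
  intros j Hj.
  specialize (Hfix j Hj).
  rewrite holds_Equiv in Hfix.
  change (holds K j phi <-> holds K (S j) (Sometime (Neg phi))) in Hfix.
  rewrite holds_Sometime in Hfix.
  exact Hfix.
Qed.
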